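(* Let $N\ge 2$, $n\ge 1$, and let $\mathbf{P}_1,\dots,\mathbf{P}_N\in\mathbb{R}^n$ satisfy $\sum_{i=1}^N\mathbf{P}_i=0$. Let $(Y_1,\dots,Y_N)\in[0,\infty)^N$ with not all $Y_i$ equal to zero. Consider the system for unknowns $\mathbf{V}_1,\dots,\mathbf{V}_N\in\mathbb{R}^n$: $$\sum_{i=1}^N Y_i\mathbf{V}_i=0,\qquad \sum_{j=1}^N B_{ij}(\mathbf{Y})\mathbf{V}_j=\mathbf{P}_i\quad(1\le i\le N),\tag{S1}$$ and the system for unknowns $\mathbf{F}_1,\dots,\mathbf{F}_N\in\mathbb{R}^n$: $$\sum_{i=1}^N\mathbf{F}_i=0,\qquad \Big(\sum_{k\ne i}d'_{ik}Y_k\Big)\mathbf{F}_i-Y_i\sum_{j\ne i}d'_{ij}\mathbf{F}_j=\mathbf{P}_i\quad(1\le i\le N).\tag{S2}$$ Then: (i) If $Y_i>0$ for all $i$, the system (S1) (which consists of $N+1$ vector equations) is consistent and determines $\mathbf{V}_1,\dots,\mathbf{V}_N$ uniquely, and (S2) determines $\mathbf{F}_i=Y_i\mathbf{V}_i$ uniquely. Moreover $\mathbf{V}=(\mathbf{V}_1,\dots,\mathbf{V}_N)$ is the unique solution of $\sum_{j}C_{ij}(\mathbf{Y})\mathbf{V}_j=\mathbf{P}_i$, $1\le i\le N$, where $C(\mathbf{Y})$ is symmetric positive definite. (ii) If, after relabeling, $Y_1,\dots,Y_k>0$ and $Y_{k+1}=\dots=Y_N=0$ for some $1\le k<N$, then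 in (S1) the vectors $\mathbf{V}_1,\dots,\mathbf{V}_k$ are uniquely determined while $\mathbf{V}_{k+1},\dots,\mathbf{V}_N$ are undetermined (when solutions exist); nevertheless all $\mathbf{F}_i$ are uniquely determined by (S2): for $i=k+1,\dots,N$, $\mathbf{F}_i=\mathbf{P}_i/S_i$ with $S_i=\sum_{j=1}^k d'_{ij}Y_j$, and $\mathbf{F}_1,\dots,\mathbf{F}_k$ are the unique solution of the $k\times k$ (vector) system $$\Big(\sum_{j\le k, j\ne i}d'_{ij}Y_j+\gamma Y_i\Big)\mathbf{F}_i-Y_i\sum_{j\le k,j\ne i}(d'_{ij}-\gamma)\mathbf{F}_j=\mathbf{P}_i+Y_i\sum_{j=k+1}^N(d'_{ij}-\gamma)\mathbf{F}_j,\quad 1\le i\le k.$$ In particular $\mathbf{F}_{k+1}=\dots=\mathbf{F}_N=0$ if $\mathbf{P}_{k+1}=\dots=\mathbf{P}_N=0$. (iii) In all cases, the linear system $$\Big(\sum_{j\ne i}d'_{ij}Y_j+\gamma Y_i\Big)\mathbf{F}_i-Y_i\sum_{j\ne i}(d'_{ij}-\gamma)\mathbf{F}_j=\mathbf{P}_i,\quad 1\le i\le N,\tag{S3}$$ has an invertible matrix (for every $\mathbf{P}\in\mathbb{R}^{Nn}$, whether or not $\sum_i\mathbf{P}_i=0$); its solution satisfies $\gamma(\sum_iY_i)(\sum_j\mathbf{F}_j)=\sum_j\mathbf{P}_j$, and when $\sum_i\mathbf{P}_i=0$ the system (S3) is equivalent to (S2), so the $\mathbf{F}_i$ are uniquely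 determined as the solution of (S3).
   Context: Fix molecular masses $M_1,\dots,M_N>0$ and symmetric constants $d_{ij}=d_{ji}>0$ for $i\ne j$ (inverse binary diffusion coefficients). Set $d'_{ij}=d_{ij}/(M_iM_j)$ for $i\neq j$ and $\gamma=\min_{i\ne j}d'_{ij}>0$. For $\mathbf{Y}=(Y_1,\dots,Y_N)$, the $N\times N$ matrix $B(\mathbf{Y})$ is defined by $B_{ij}(\mathbf{Y})=-d'_{ij}Y_iY_j$ for $j\ne i$ and $B_{ii}(\mathbf{Y})=\sum_{k\ne i}d'_{ik}Y_iY_k$, and $C(\mathbf{Y})$ is defined by $C_{ij}(\mathbf{Y})=B_{ij}(\mathbf{Y})+\gamma Y_iY_j$. Matrices act componentwise on $N$-tuples of vectors of $\mathbb{R}^n$. Sums $\sum_{j\ne i}$ range over $j\in\{1,\dots,N\}\setminus\{i\}$ unless otherwise indicated. *)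

From HB Require Import structures.
From mathcomp Require Import all_boot all_order all_algebra.
Set Implicit Arguments. Unset Strict Implicit. Unset Printing Implicit Defensive.
Import Order.TTheory GRing.Theory Num.Theory.
Local Open Scope ring_scope.

Section Defs.
Variables (R : realFieldType) (N n : nat).
Variables (M : 'I_N -> R) (d : 'I_N -> 'I_N -> R).

Definition dp (i j : 'I_N) : R := d i j / (M i * M j).

(* gamma = min_{i <> j} d'_{ij}; the seed (max of the same family) is
   irrelevant as soon as N >= 2 (the family is nonempty). *)
Definition gam : R :=
  \big[Num.min/ \big[Num.max/0]_(p : 'I_N * 'I_N | p.1 != p.2) dp p.1 p.2]_(p : 'I_N * 'I_N | p.1 != p.2)
     dp p.1 p.2.

Variable Y : 'I_N -> R.

Definition Bm : 'M[R]_N :=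
  \matrix_(i, j) if i == j then \sum_(k | k != i) dp i k * Y i * Y k
                 else - (dp i j * Y i * Y j).

Definition Cm : 'M[R]_N := \matrix_(i, j) (Bm i j + gam * Y i * Y j).

(* Unknowns/data are N-tuples of vectors of R^n, stored as the rows of an
   N x n matrix (row i V = V_i).  Matrices act componentwise: A *m V. *)

Definition S1 (V P : 'M[R]_(N, n)) : Prop :=
  \sum_i Y i *: row i V = 0 /\ Bm *m V = P.

Definition S2 (F P : 'M[R]_(N, n)) : Prop :=
  \sum_i row i F = 0 /\
  forall i, (\sum_(k | k != i) dp i k * Y k) *: row i F
            - Y i *: \sum_(j | j != i) dp i j *: row j F = row i P.

Definition S3 (F P : 'M[R]_(N, n)) : Prop :=
  forall i, (\sum_(j | j != i) dp i j * Y j + gam * Y i) *: row i F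
            - Y i *: \sum_(j | j != i) (dp i j - gam) *: row j F = row i P.

Definition A3 : 'M[R]_N :=
  \matrix_(i, j) if i == j then \sum_(k | k != i) dp i k * Y k + gam * Y i
                 else - (Y i * (dp i j - gam)).

Definition Ssum (i : 'I_N) : R := \sum_(j | 0 < Y j) dp i j * Y j.

(* The reduced k x k system of part (ii), indexed by the set {i | Y_i > 0}
   (so no relabeling is needed); the rows j with Y_j = 0 of G enter as data. *)
Definition Ksys (G P : 'M[R]_(N, n)) : Prop :=
  forall i, 0 < Y i ->
    (\sum_(j | (0 < Y j) && (j != i)) dp i j * Y j + gam * Y i) *: row i G
    - Y i *: \sum_(j | (0 < Y j) && (j != i)) (dp i j - gam) *: row j G
    = row i P + Y i *: \sum_(j | Y j == 0) (dp i j - gam) *: row j G.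

End Defs.

Definition posdef (R : realFieldType) (N : nat) (A : 'M[R]_N) : Prop :=
  A^T = A /\ forall x : 'rV[R]_N, x != 0 -> 0 < (x *m A *m x^T) 0 0.

From Pilot Require Import Defs.
From HB Require Import structures.
From mathcomp Require Import all_boot all_order all_algebra.
From mathcomp Require Import ring.
Set Implicit Arguments. Unset Strict Implicit. Unset Printing Implicit Defensive.
Import Order.TTheory GRing.Theory Num.Theory.
Local Open Scope ring_scope.

(* Every system in the theorem acts componentwise on N-tuples of vectors of
   R^n, so everything reduces to two scalar operators on x : 'I_N -> R:
     opS2 x i = (sum_k w_ik Y_k) x_i - Y_i sum_j w_ij x_j      (rows of (S2)),
     opS3 g x i = opS2 x i + g Y_i sum_j x_j                    (rows of (S3)).
   For symmetric weights the rows of opS2 sum to zero, and the quadratic form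
   sum_i u_i opS2 (Y u)_i equals (1/2) sum_ij w_ij Y_i Y_j (u_i - u_j)^2.
   Hence opS2 x = 0 forces x = 0 off the support of Y and x proportional to Y
   on it, so opS2 is injective on {sum_i x_i = 0}; summing the rows of opS3
   gives g (sum_i Y_i)(sum_i x_i), so opS3 is injective for g > 0.
   The first section proves these facts for arbitrary positive symmetric
   weights. *)

Section WeightedOperators.
Variables (R : realFieldType) (N : nat).
Variables (w : 'I_N -> 'I_N -> R) (Y : 'I_N -> R).

Definition opS2 (x : 'I_N -> R) (i : 'I_N) : R :=
  (\sum_k w i k * Y k) * x i - Y i * \sum_j w i j * x j.

Definition opS3 (g : R) (x : 'I_N -> R) (i : 'I_N) : R :=
  opS2 x i + g * Y i * \sum_j x j.

Lemma opS2_ext x y i : x =1 y -> opS2 x i = opS2 y i.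
Proof.
move=> exy; rewrite /opS2 exy; congr (_ - _ * _).
by apply: eq_bigr => j _; rewrite exy.
Qed.

Lemma opS3_ext g x y i : x =1 y -> opS3 g x i = opS3 g y i.
Proof.
by move=> exy; rewrite /opS3 (opS2_ext i exy); congr (_ + _ * _); apply: eq_bigr => j _.
Qed.

Lemma opS2B x y i : opS2 (fun j => x j - y j) i = opS2 x i - opS2 y i.
Proof.
rewrite /opS2.
have -> : \sum_j w i j * (x j - y j) = \sum_j w i j * x j - \sum_j w i j * y j.
  by rewrite -sumrB; apply: eq_bigr => j _; rewrite mulrBr.
ring.
Qed.

(* The diagonal weight w_ii cancels: this is the form written in (S2). *)
Lemma opS2_offdiag x i : opS2 x i =
  (\sum_(k | k != i) w i k * Y k) * x i - Y i * \sum_(j | j != i) w i j * x j.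
Proof. rewrite /opS2 (bigD1 i) //= [X in _ - _ * X](bigD1 i) //=; ring. Qed.

(* ... and the form written in (S3). *)
Lemma opS3_offdiag g x i : opS3 g x i =
  (\sum_(j | j != i) w i j * Y j + g * Y i) * x i
  - Y i * \sum_(j | j != i) (w i j - g) * x j.
Proof.
have -> : \sum_(j | j != i) (w i j - g) * x j =
    \sum_(j | j != i) w i j * x j - g * \sum_(j | j != i) x j.
  by rewrite mulr_sumr -sumrB; apply: eq_bigr => j _; rewrite mulrBl.
rewrite /opS3 opS2_offdiag [\sum_j x j](bigD1 i) //=; ring.
Qed.

Hypothesis w_sym : forall i j, w i j = w j i.

(* Summing the rows of (S2) gives 0 identically; this is why (S2) carries
   the extra constraint sum_i x_i = 0 and why (S3) is a regularization. *)
Lemma sum_opS2 x : \sum_i opS2 x i = 0.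
Proof.
rewrite /opS2 sumrB; apply/eqP; rewrite subr_eq0; apply/eqP.
rewrite (eq_bigr (fun i => \sum_k w i k * Y k * x i)) => [|i _]; last first.
  by rewrite mulr_suml.
rewrite [RHS](eq_bigr (fun i => \sum_j Y i * (w i j * x j))) => [|i _]; last first.
  by rewrite mulr_sumr.
rewrite [RHS]exchange_big /=; apply: eq_bigr => i _; apply: eq_bigr => k _.
by rewrite w_sym; ring.
Qed.

Lemma sum_opS3 g x : \sum_i opS3 g x i = g * (\sum_i Y i) * \sum_i x i.
Proof.
rewrite /opS3 big_split /= sum_opS2 add0r -mulr_suml.
by congr (_ * _); rewrite mulr_sumr.
Qed.

Lemma opS2_quad u :
  2 * \sum_i u i * opS2 (fun j => Y j * u j) i =
  \sum_i \sum_j w i j * Y i * Y j * (u i - u j) ^+ 2.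
Proof.
have row_i i : u i * opS2 (fun j => Y j * u j) i =
    \sum_j w i j * Y i * Y j * (u i * (u i - u j)).
  rewrite /opS2 mulr_suml [Y i * \sum_j _]mulr_sumr -sumrB mulr_sumr.
  by apply: eq_bigr => j _; ring.
rewrite (eq_bigr _ (fun i _ => row_i i)).
set T := \sum_i \sum_j _.
have T_swap : T = \sum_i \sum_j w i j * Y i * Y j * (u j * (u j - u i)).
  rewrite /T exchange_big /=; apply: eq_bigr => i _; apply: eq_bigr => j _.
  by rewrite w_sym; ring.
rewrite mulr2n mulrDl mul1r {2}T_swap -big_split /=; apply: eq_bigr => i _.
by rewrite -big_split /=; apply: eq_bigr => j _; ring.
Qed.

Hypothesis w_pos : forall i j, i != j -> 0 < w i j.
Hypothesis Y_ge0 : forall i, 0 <= Y i.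

Lemma quad_term_ge0 u i j : 0 <= w i j * Y i * Y j * (u i - u j) ^+ 2.
Proof.
case: (eqVneq i j) => [->|ne]; first by rewrite subrr expr0n /= mulr0.
by rewrite mulr_ge0 ?sqr_ge0 // !mulr_ge0 // ltW // w_pos.
Qed.

Lemma opS2_quad_ge0 u : 0 <= \sum_i u i * opS2 (fun j => Y j * u j) i.
Proof.
rewrite -(pmulr_rge0 _ (ltr0Sn _ 1)) opS2_quad.
by do 2!apply: sumr_ge0 => ? _; apply: quad_term_ge0.
Qed.

Lemma opS2_quad_eq0 u : \sum_i u i * opS2 (fun j => Y j * u j) i = 0 ->
  forall i j, 0 < Y i -> 0 < Y j -> u i = u j.
Proof.
move=> Q0 i j Yi Yj; case: (eqVneq i j) => [->//|ne].
have := opS2_quad u; rewrite Q0 mulr0 => /esym sum0.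
have row_i0 : \sum_j w i j * Y i * Y j * (u i - u j) ^+ 2 = 0.
  apply: (psumr_eq0P _ sum0) => // k _.
  by apply: sumr_ge0 => l _; apply: quad_term_ge0.
have /eqP : w i j * Y i * Y j * (u i - u j) ^+ 2 = 0.
  by apply: (psumr_eq0P _ row_i0) => // k _; apply: quad_term_ge0.
rewrite !mulf_eq0 (gt_eqF (w_pos ne)) (gt_eqF Yi) (gt_eqF Yj) /=.
by rewrite orbb subr_eq0 => /eqP.
Qed.

Lemma opS3_quad g u : \sum_i u i * opS3 g (fun j => Y j * u j) i =
  \sum_i u i * opS2 (fun j => Y j * u j) i + g * (\sum_j Y j * u j) ^+ 2.
Proof.
rewrite (eq_bigr (fun i => u i * opS2 (fun j => Y j * u j) i
           + g * (\sum_j Y j * u j) * (Y i * u i))) => [|i _]; last first.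
  by rewrite /opS3; ring.
by rewrite big_split /= -mulr_sumr expr2 mulrA.
Qed.

Lemma opS3_quad_ge0 g u : 0 <= g ->
  0 <= \sum_i u i * opS3 g (fun j => Y j * u j) i.
Proof.
move=> g_ge0; rewrite opS3_quad addr_ge0 ?opS2_quad_ge0 // mulr_ge0 ?sqr_ge0 //.
Qed.

Lemma sum_offdiag_split (f : 'I_N -> R) i : 0 < Y i ->
  \sum_(j | j != i) f j =
  \sum_(j | (0 < Y j) && (j != i)) f j + \sum_(j | Y j == 0) f j.
Proof.
move=> Yi; rewrite (bigID (fun j => 0 < Y j)) /=; congr (_ + _).
  by apply: eq_bigl => j; rewrite andbC.
apply: eq_bigl => j; case: (eqVneq (Y j) 0) => [Yj0|Yj_neq0].
  by rewrite Yj0 ltxx andbT; apply: contraTneq Yi => <-; rewrite Yj0 ltxx.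
by rewrite lt_def Yj_neq0 Y_ge0 andbF.
Qed.

Lemma opS3_support_split g x i : 0 < Y i -> opS3 g x i =
  (\sum_(j | (0 < Y j) && (j != i)) w i j * Y j + g * Y i) * x i
  - Y i * \sum_(j | (0 < Y j) && (j != i)) (w i j - g) * x j
  - Y i * \sum_(j | Y j == 0) (w i j - g) * x j.
Proof.
move=> Yi; rewrite opS3_offdiag !(sum_offdiag_split _ Yi).
rewrite [\sum_(j | Y j == 0) w i j * Y j]big1 => [|j /eqP ->]; last by rewrite mulr0.
ring.
Qed.

Hypothesis Y_pos : exists j, 0 < Y j.

Lemma sumY_gt0 : 0 < \sum_i Y i.
Proof.
case: Y_pos => j0 Yj0; rewrite (bigD1 j0) //= ltr_wpDr //.
by apply: sumr_ge0 => i _.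
Qed.

Lemma diag_weight_gt0 i : Y i = 0 -> 0 < \sum_k w i k * Y k.
Proof.
move=> Yi0; case: Y_pos => j0 Yj0.
have ne : i != j0 by apply: contraTneq Yj0 => <-; rewrite Yi0 ltxx.
rewrite (bigD1 j0) //= ltr_pwDl ?mulr_gt0 ?w_pos //.
apply: sumr_ge0 => k _; case: (eqVneq i k) => [<-|nk]; first by rewrite Yi0 mulr0.
by rewrite mulr_ge0 ?Y_ge0 // ltW // w_pos.
Qed.

Lemma opS2_kernel x : (forall i, opS2 x i = 0) -> \sum_i x i = 0 ->
  forall i, x i = 0.
Proof.
move=> Lx0 sum0.
have x_off i : Y i = 0 -> x i = 0.
  move=> Yi0; have := Lx0 i; rewrite /opS2 Yi0 mul0r subr0 => /eqP.
  by rewrite mulf_eq0 gt_eqF ?diag_weight_gt0 //= => /eqP.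
pose u j := x j / Y j.
have xYu j : x j = Y j * u j.
  case: (eqVneq (Y j) 0) => [Yj0|Yj_neq0]; first by rewrite x_off // Yj0 mul0r.
  by rewrite /u mulrC divfK.
have Q0 : \sum_i u i * opS2 (fun j => Y j * u j) i = 0.
  by rewrite big1 // => i _; rewrite -(opS2_ext i xYu) Lx0 mulr0.
case: Y_pos => j0 Yj0.
have x_prop j : x j = Y j * u j0.
  case: (eqVneq (Y j) 0) => [Yj_eq0|Yj_neq0]; first by rewrite x_off // Yj_eq0 mul0r.
  have Yj : 0 < Y j by rewrite lt_def Yj_neq0 Y_ge0.
  by rewrite xYu (opS2_quad_eq0 Q0 Yj Yj0).
have : \sum_i x i = u j0 * \sum_i Y i.
  by rewrite mulr_sumr; apply: eq_bigr => j _; rewrite x_prop mulrC.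
rewrite sum0 => /esym/eqP; rewrite mulf_eq0 (gt_eqF sumY_gt0) orbF => /eqP u0 i.
by rewrite x_prop u0 mulr0.
Qed.

Lemma opS2_inj x y : (forall i, opS2 x i = opS2 y i) ->
  \sum_i x i = \sum_i y i -> x =1 y.
Proof.
move=> Lxy sxy i; apply/eqP; rewrite -subr_eq0; apply/eqP; move: i.
apply: (opS2_kernel (x := fun j => x j - y j)) => [i|].
  by rewrite opS2B Lxy subrr.
by rewrite sumrB sxy subrr.
Qed.

(* For g > 0 the regularized operator is injective without any constraint:
   summing its rows recovers sum_i x_i (Lemma sum_opS3). *)
Lemma opS3_inj g x y : 0 < g -> (forall i, opS3 g x i = opS3 g y i) -> x =1 y.
Proof.
move=> g_gt0 Lxy.
have sxy : \sum_i x i = \sum_i y i.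
  have : \sum_i opS3 g x i = \sum_i opS3 g y i by apply: eq_bigr.
  rewrite !sum_opS3 => /eqP; rewrite -subr_eq0 -mulrBr mulf_eq0.
  by rewrite gt_eqF ?mulr_gt0 ?sumY_gt0 //= subr_eq0 => /eqP.
by apply: opS2_inj => // i; have := Lxy i; rewrite /opS3 sxy => /addIr.
Qed.

Lemma opS3_quad_eq0 g u : 0 < g -> (forall j, 0 < Y j) ->
  \sum_i u i * opS3 g (fun j => Y j * u j) i = 0 -> forall j, u j = 0.
Proof.
move=> g_gt0 Y_gt0; rewrite opS3_quad => /eqP.
have sq_ge0 : 0 <= g * (\sum_j Y j * u j) ^+ 2 by rewrite mulr_ge0 ?sqr_ge0 ?ltW.
rewrite paddr_eq0 ?opS2_quad_ge0 //.
case/andP => /eqP Q0; rewrite mulf_eq0 (gt_eqF g_gt0) /= sqrf_eq0 => /eqP s0.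
case: Y_pos => j0 Yj0.
have u_const j : u j = u j0 by apply: opS2_quad_eq0.
have : \sum_j Y j * u j = u j0 * \sum_i Y i.
  by rewrite mulr_sumr; apply: eq_bigr => j _; rewrite u_const mulrC.
rewrite s0 => /esym/eqP; rewrite mulf_eq0 (gt_eqF sumY_gt0) orbF => /eqP u0 j.
by rewrite u_const u0.
Qed.

End WeightedOperators.

Section MulticomponentDiffusion.
Variables (R : realFieldType) (N : nat) (M : 'I_N -> R) (d : 'I_N -> 'I_N -> R).
Hypothesis hN : (2 <= N)%N.
Hypothesis hM : forall i, 0 < M i.
Hypothesis hdsym : forall i j, i != j -> d i j = d j i.
Hypothesis hdpos : forall i j, i != j -> 0 < d i j.
Variable Y : 'I_N -> R.
Hypothesis hY0 : forall i, 0 <= Y i.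
Hypothesis hYnz : exists i, Y i != 0.

Local Notation dp := (dp M d).
Local Notation gam := (gam M d).
Local Notation L := (opS2 dp Y).
Local Notation L3 := (opS3 dp Y gam).

Lemma dp_sym i j : dp i j = dp j i.
Proof.
case: (eqVneq i j) => [->//|ne]; by rewrite /Defs.dp hdsym // [M j * _]mulrC.
Qed.

Lemma dp_gt0 i j : i != j -> 0 < dp i j.
Proof. by move=> ne; rewrite /Defs.dp divr_gt0 ?mulr_gt0 ?hdpos. Qed.

(* gamma is a minimum over the nonempty (as N >= 2) family of d'_ij, i != j. *)
Lemma gam_gt0 : 0 < gam.
Proof.
have N_gt0 : (0 < N)%N by apply: ltn_trans hN.
pose i0 : 'I_N := Ordinal N_gt0; pose i1 : 'I_N := Ordinal hN.
rewrite /Defs.gam; apply: (big_ind (fun x => 0 < x)).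
- apply: lt_le_trans (dp_gt0 (isT : i0 != i1)) _.
  exact: (@le_bigmax_cond _ _ _ 0 (i0, i1) (fun p : 'I_N * 'I_N => p.1 != p.2)
            (fun p => dp p.1 p.2)).
- by move=> x y x_gt0 y_gt0; rewrite lt_min x_gt0 y_gt0.
- by move=> [i j] /= ne; apply: dp_gt0.
Qed.

Lemma Y_pos : exists j, 0 < Y j.
Proof. by case: hYnz => j Yj; exists j; rewrite lt_def Yj hY0. Qed.

Lemma gam_sumY_neq0 : gam * \sum_i Y i != 0.
Proof. by rewrite mulf_neq0 // gt_eqF ?gam_gt0 ?(sumY_gt0 hY0 Y_pos). Qed.

Lemma mulA3 m (F : 'M[R]_(N, m)) i c : (A3 M d Y *m F) i c = L3 (fun j => F j c) i.
Proof.
rewrite opS3_offdiag mxE (bigD1 i) //= mxE eqxx /= mulr_sumr -sumrN.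
congr (_ + _); apply: eq_bigr => j ji; rewrite mxE eq_sym (negbTE ji) /=; ring.
Qed.

Lemma mulBm m (V : 'M[R]_(N, m)) i c :
  (Bm M d Y *m V) i c = L (fun j => Y j * V j c) i.
Proof.
rewrite opS2_offdiag mxE (bigD1 i) //= mxE eqxx /= mulr_sumr -sumrN.
congr (_ + _); first by rewrite !mulr_suml; apply: eq_bigr => k _; ring.
by apply: eq_bigr => j ji; rewrite mxE eq_sym (negbTE ji) /=; ring.
Qed.

Lemma mulCm m (V : 'M[R]_(N, m)) i c :
  (Cm M d Y *m V) i c = L3 (fun j => Y j * V j c) i.
Proof.
rewrite /opS3 -(mulBm V) !mxE mulr_sumr -big_split /=.
by apply: eq_bigr => j _; rewrite mxE; ring.
Qed.

Lemma sum_rows_entry m (F : 'M[R]_(N, m)) (P : pred 'I_N) (a : 'I_N -> R) c :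
  (\sum_(j | P j) a j *: row j F) 0 c = \sum_(j | P j) a j * F j c.
Proof. by rewrite summxE; apply: eq_bigr => j _; rewrite !mxE. Qed.

Lemma sum_rows_entry1 m (F : 'M[R]_(N, m)) c : (\sum_j row j F) 0 c = \sum_j F j c.
Proof. by rewrite summxE; apply: eq_bigr => j _; rewrite !mxE. Qed.

Lemma S1E m (V P : 'M[R]_(N, m)) : S1 M d Y V P <->
  (forall c, \sum_i Y i * V i c = 0) /\
  (forall i c, L (fun j => Y j * V j c) i = P i c).
Proof.
split => [[sum0 BV]|[sum0 BV]]; split.
- by move=> c; rewrite -sum_rows_entry sum0 mxE.
- by move=> i c; rewrite -mulBm BV.
- by apply/rowP => c; rewrite sum_rows_entry sum0 mxE.
- by apply/matrixP => i c; rewrite mulBm BV.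
Qed.

Lemma S2E m (F P : 'M[R]_(N, m)) : S2 M d Y F P <->
  (forall c, \sum_i F i c = 0) /\ (forall i c, L (fun j => F j c) i = P i c).
Proof.
have rowE i c : ((\sum_(k | k != i) dp i k * Y k) *: row i F
            - Y i *: \sum_(j | j != i) dp i j *: row j F) 0 c = L (fun j => F j c) i.
  by rewrite !mxE sum_rows_entry opS2_offdiag.
split => [[sum0 LF]|[sum0 LF]]; split.
- by move=> c; rewrite -sum_rows_entry1 sum0 mxE.
- by move=> i c; rewrite -rowE LF mxE.
- by apply/rowP => c; rewrite sum_rows_entry1 sum0 mxE.
- by move=> i; apply/rowP => c; rewrite rowE LF mxE.
Qed.

Lemma S3E m (F P : 'M[R]_(N, m)) : S3 M d Y F P <->
  (forall i c, L3 (fun j => F j c) i = P i c).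
Proof.
have rowE i c : ((\sum_(j | j != i) dp i j * Y j + gam * Y i) *: row i F
    - Y i *: \sum_(j | j != i) (dp i j - gam) *: row j F) 0 c = L3 (fun j => F j c) i.
  by rewrite !mxE sum_rows_entry opS3_offdiag.
split => [LF i c|LF i]; first by rewrite -rowE LF mxE.
by apply/rowP => c; rewrite rowE LF mxE.
Qed.

Lemma KsysE m (G P : 'M[R]_(N, m)) : Ksys M d Y G P <->
  (forall i, 0 < Y i -> forall c, L3 (fun j => G j c) i = P i c).
Proof.
have lhsE i c : 0 < Y i ->
   ((\sum_(j | (0 < Y j) && (j != i)) dp i j * Y j + gam * Y i) *: row i G
    - Y i *: \sum_(j | (0 < Y j) && (j != i)) (dp i j - gam) *: row j G) 0 c
   = L3 (fun j => G j c) i + Y i * \sum_(j | Y j == 0) (dp i j - gam) * G j c.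
  by move=> Yi; rewrite !mxE sum_rows_entry (opS3_support_split _ hY0 _ _ Yi); ring.
have rhsE i c : (row i P + Y i *: \sum_(j | Y j == 0) (dp i j - gam) *: row j G) 0 c
   = P i c + Y i * \sum_(j | Y j == 0) (dp i j - gam) * G j c.
  by rewrite !mxE sum_rows_entry.
split => K i Yi; last by apply/rowP => c; rewrite lhsE // rhsE K.
by move=> c; move/rowP/(_ c): (K i Yi); rewrite lhsE // rhsE => /addIr.
Qed.

Lemma S3_iff_A3 m (F P : 'M[R]_(N, m)) : S3 M d Y F P <-> A3 M d Y *m F = P.
Proof.
rewrite S3E; split => [L3F|<- i c]; last by rewrite mulA3.
by apply/matrixP => i c; rewrite mulA3 L3F.
Qed.

Lemma A3_inj m (F G : 'M[R]_(N, m)) : A3 M d Y *m F = A3 M d Y *m G -> F = G.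
Proof.
move=> A3FG; apply/matrixP => i c; move: i.
by apply: (opS3_inj dp_sym dp_gt0 hY0 Y_pos gam_gt0) => i; rewrite -!mulA3 A3FG.
Qed.

Lemma A3_unit : A3 M d Y \in unitmx.
Proof.
rewrite -unitmx_tr -row_free_unit -kermx_eq0; apply/rowV0P => v /sub_kermxP vA3.
have : A3 M d Y *m v^T = A3 M d Y *m 0.
  by rewrite mulmx0 -[A3 M d Y]trmxK -trmx_mul vA3 trmx0.
by move/A3_inj => v0; rewrite -[v]trmxK v0 trmx0.
Qed.

Lemma S3_exists_unique m (P : 'M[R]_(N, m)) : exists! F, S3 M d Y F P.
Proof.
exists (invmx (A3 M d Y) *m P); split.
  by apply/S3_iff_A3; rewrite mulKVmx ?A3_unit.
by move=> F /S3_iff_A3 <-; rewrite mulKmx ?A3_unit.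
Qed.

Lemma S3_sum m (F P : 'M[R]_(N, m)) : S3 M d Y F P ->
  (gam * \sum_i Y i) *: \sum_j row j F = \sum_j row j P.
Proof.
move=> /S3E L3F; apply/rowP => c; rewrite mxE !sum_rows_entry1.
by rewrite -(sum_opS3 Y dp_sym); apply: eq_bigr => j _; exact: L3F.
Qed.

(* When sum_i P_i = 0, (S3) forces sum_i F_i = 0 and then reduces to (S2). *)
Lemma S3_iff_S2 m (F P : 'M[R]_(N, m)) : \sum_i row i P = 0 ->
  S3 M d Y F P <-> S2 M d Y F P.
Proof.
move=> sumP0; split => [S3FP|/S2E [sumF0 LF]]; last first.
  by apply/S3E => i c; rewrite /opS3 sumF0 mulr0 addr0 LF.
have sumF0 c : \sum_i F i c = 0.
  move/rowP/(_ c): (S3_sum S3FP); rewrite sumP0 mxE !sum_rows_entry1 mxE => /eqP.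
  by rewrite mulf_eq0 (negbTE gam_sumY_neq0) /= => /eqP.
apply/S2E; split => // i c; move/S3E/(_ i c): S3FP.
by rewrite /opS3 sumF0 mulr0 addr0.
Qed.

Lemma S2_unique m (F G P : 'M[R]_(N, m)) : S2 M d Y F P -> S2 M d Y G P -> F = G.
Proof.
move=> /S2E [sumF0 LF] /S2E [sumG0 LG]; apply/matrixP => i c; move: i.
apply: (opS2_inj dp_sym dp_gt0 hY0 Y_pos) => [i|]; first by rewrite LF LG.
by rewrite sumF0 sumG0.
Qed.

Lemma S2_exists_unique m (P : 'M[R]_(N, m)) : \sum_i row i P = 0 ->
  exists! F, S2 M d Y F P.
Proof.
move=> sumP0; have [F [S3FP _]] := S3_exists_unique P.
have S2FP : S2 M d Y F P by apply/(S3_iff_S2 _ sumP0).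
by exists F; split => // G /(S2_unique S2FP).
Qed.

Definition flux m (V : 'M[R]_(N, m)) : 'M[R]_(N, m) := \matrix_(j, c) (Y j * V j c).

Lemma S1_iff_S2_flux m (V P : 'M[R]_(N, m)) : S1 M d Y V P <-> S2 M d Y (flux V) P.
Proof.
split => [/S1E [sum0 LV] | /S2E [sum0 LV]]; [apply/S2E | apply/S1E]; split.
- by move=> c; rewrite -[RHS](sum0 c); apply: eq_bigr => j _; rewrite mxE.
- by move=> i c; rewrite -LV; apply: opS2_ext => j; rewrite mxE.
- by move=> c; rewrite -[RHS](sum0 c); apply: eq_bigr => j _; rewrite mxE.
- by move=> i c; rewrite -LV; apply: opS2_ext => j; rewrite mxE.
Qed.

Lemma S2_iff_flux m (V F P : 'M[R]_(N, m)) : S1 M d Y V P ->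
  S2 M d Y F P <-> (forall i, row i F = Y i *: row i V).
Proof.
move=> /S1_iff_S2_flux S2V.
have rowsE : F = flux V <-> (forall i, row i F = Y i *: row i V).
  split => [-> i|rowsF]; first by apply/rowP => c; rewrite !mxE.
  by apply/matrixP => i c; move/rowP/(_ c): (rowsF i); rewrite !mxE.
by split => [S2F|/rowsE ->//]; apply/rowsE; apply: S2_unique S2F S2V.
Qed.

Lemma S1_unique_on_support m (V W P : 'M[R]_(N, m)) :
  S1 M d Y V P -> S1 M d Y W P -> forall i, 0 < Y i -> row i V = row i W.
Proof.
move=> /S1_iff_S2_flux S2V /S1_iff_S2_flux S2W i Yi.
apply/rowP => c; rewrite !mxE; apply: (mulfI (lt0r_neq0 Yi)).
by move/matrixP/(_ i c): (S2_unique S2V S2W); rewrite !mxE.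
Qed.

Lemma S1_free_off_support m (V P : 'M[R]_(N, m)) i : (0 < m)%N -> Y i = 0 ->
  S1 M d Y V P -> exists W, S1 M d Y W P /\ row i W != row i V.
Proof.
move=> m_gt0 Yi0 S1VP; pose W := V + \matrix_(j, c) ((j == i)%:R : R).
have fluxW : flux W = flux V.
  apply/matrixP => j c; rewrite !mxE.
  by case: (eqVneq j i) => [->|_]; [rewrite Yi0 !mul0r | rewrite addr0].
exists W; split; first by apply/S1_iff_S2_flux; rewrite fluxW; apply/S1_iff_S2_flux.
apply/negP => /eqP/rowP/(_ (Ordinal m_gt0)); rewrite !mxE eqxx => /eqP.
by rewrite -subr_eq0 addrC addrK oner_eq0.
Qed.

(* With all Y_i > 0, V = F / Y solves (S1) when F solves (S2). *)
Lemma S1_exists m (P : 'M[R]_(N, m)) : (forall i, 0 < Y i) -> \sum_i row i P = 0 ->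
  exists V, S1 M d Y V P.
Proof.
move=> Y_gt0 sumP0; have [F [S2FP _]] := S2_exists_unique sumP0.
exists (\matrix_(j, c) (F j c / Y j)); apply/S1_iff_S2_flux.
suff -> : flux (\matrix_(j, c) (F j c / Y j)) = F by [].
by apply/matrixP => j c; rewrite !mxE mulrC divfK ?lt0r_neq0.
Qed.

Lemma Cm_solution m (V W P : 'M[R]_(N, m)) : (forall i, 0 < Y i) ->
  S1 M d Y V P -> Cm M d Y *m W = P <-> W = V.
Proof.
move=> Y_gt0 /S1E [sum0 LV].
have CmV : Cm M d Y *m V = P.
  by apply/matrixP => i c; rewrite mulCm /opS3 sum0 mulr0 addr0 LV.
split => [CmW|-> //]; apply/matrixP => i c; apply: (mulfI (lt0r_neq0 (Y_gt0 i))).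
move: i; apply: (opS3_inj dp_sym dp_gt0 hY0 Y_pos gam_gt0) => i.
by rewrite -(mulCm W) -(mulCm V) CmW CmV.
Qed.

(* C(Y) is symmetric, and its quadratic form is that of opS3 (Y .). *)
Lemma Cm_posdef : (forall i, 0 < Y i) -> posdef (Cm M d Y).
Proof.
move=> Y_gt0; split.
  apply/matrixP => i j; rewrite !mxE; case: (eqVneq i j) => [->//|ne].
  by rewrite dp_sym; ring.
move=> x x_neq0; pose u j := x 0 j.
have quadE : (x *m Cm M d Y *m x^T) 0 0 = \sum_i u i * L3 (fun j => Y j * u j) i.
  rewrite -mulmxA mxE; apply: eq_bigr => i _; rewrite mulCm.
  by congr (_ * _); apply: opS3_ext => j; rewrite mxE.
rewrite quadE lt_def (opS3_quad_ge0 dp_sym dp_gt0 hY0 _ (ltW gam_gt0)) andbT.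
apply: contra x_neq0 => /eqP /(opS3_quad_eq0 dp_sym dp_gt0 hY0 Y_pos gam_gt0 Y_gt0) u0.
by apply/eqP/rowP => j; rewrite mxE; apply: u0.
Qed.

Lemma SsumE i : Ssum M d Y i = \sum_k dp i k * Y k.
Proof.
rewrite /Ssum [RHS](bigID (fun j => 0 < Y j)) /= [X in _ = _ + X]big1 ?addr0 // => j.
by rewrite lt_def hY0 andbT negbK => /eqP ->; rewrite mulr0.
Qed.

Lemma S2_off_support m (F P : 'M[R]_(N, m)) : S2 M d Y F P ->
  forall i, Y i = 0 -> row i F = (Ssum M d Y i)^-1 *: row i P.
Proof.
move=> /S2E [_ LF] i Yi0; apply/rowP => c; rewrite !mxE -(LF i c) /opS2 Yi0 mul0r subr0.
have S_gt0 := diag_weight_gt0 dp_gt0 hY0 Y_pos Yi0.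
by rewrite SsumE mulrA mulVf ?mul1r ?lt0r_neq0.
Qed.

Lemma S2_Ksys m (F P : 'M[R]_(N, m)) : S2 M d Y F P -> Ksys M d Y F P.
Proof.
by move=> /S2E [sumF0 LF]; apply/KsysE => i _ c; rewrite /opS3 sumF0 mulr0 addr0 LF.
Qed.

Lemma Ksys_unique m (F G P : 'M[R]_(N, m)) : Ksys M d Y F P -> Ksys M d Y G P ->
  (forall i, Y i = 0 -> row i G = row i F) -> G = F.
Proof.
move=> /KsysE KF /KsysE KG GF_off; apply/matrixP => i c; move: i.
apply: (opS3_inj dp_sym dp_gt0 hY0 Y_pos gam_gt0) => i.
case: (eqVneq (Y i) 0) => [Yi0|Yi_neq0]; last by rewrite KG ?KF // lt_def Yi_neq0 hY0.
move/rowP/(_ c): (GF_off i Yi0); rewrite !mxE => GFi.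
by rewrite /opS3 /opS2 Yi0 !mul0r !subr0 mulr0 !mul0r !addr0 GFi.
Qed.

Lemma part_i n : (forall i, 0 < Y i) ->
  forall P : 'M[R]_(N, n), \sum_i row i P = 0 ->
    (exists! V, S1 M d Y V P)
    /\ (forall V, S1 M d Y V P ->
          forall F, S2 M d Y F P <-> (forall i, row i F = Y i *: row i V))
    /\ (forall V, S1 M d Y V P -> forall W, Cm M d Y *m W = P <-> W = V)
    /\ posdef (Cm M d Y).
Proof.
move=> Y_gt0 P sumP0; split; [|split; [|split]].
- have [V S1VP] := S1_exists Y_gt0 sumP0.
  exists V; split => // W S1WP; apply/row_matrixP => i.
  exact: S1_unique_on_support S1VP S1WP i (Y_gt0 i).
- by move=> V S1VP F; apply: S2_iff_flux.
- by move=> V S1VP W; apply: Cm_solution.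
- exact: Cm_posdef.
Qed.

(* Part (ii) of the theorem; it holds whether or not some Y_i vanishes. *)
Lemma part_ii n : (0 < n)%N ->
  forall P : 'M[R]_(N, n), \sum_i row i P = 0 ->
    (forall V W, S1 M d Y V P -> S1 M d Y W P ->
       forall i, 0 < Y i -> row i V = row i W)
    /\ (forall V, S1 M d Y V P -> forall i, Y i = 0 ->
          exists W, S1 M d Y W P /\ row i W != row i V)
    /\ (exists! F, S2 M d Y F P)
    /\ (forall F, S2 M d Y F P ->
          (forall i, Y i = 0 -> row i F = (Ssum M d Y i)^-1 *: row i P)
          /\ Ksys M d Y F P
          /\ (forall G, (forall i, Y i = 0 -> row i G = row i F) ->
                Ksys M d Y G P -> forall i, 0 < Y i -> row i G = row i F)
          /\ ((forall i, Y i = 0 -> row i P = 0) ->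
                forall i, Y i = 0 -> row i F = 0)).
Proof.
move=> n_gt0 P sumP0; split; [|split; [|split]].
- by move=> V W; apply: S1_unique_on_support.
- by move=> V S1VP i Yi0; apply: S1_free_off_support.
- exact: S2_exists_unique.
move=> F S2FP; have F_off := S2_off_support S2FP.
split; [exact: F_off | split; [exact: S2_Ksys | split]].
- by move=> G GF_off KG i _; rewrite (Ksys_unique (S2_Ksys S2FP) KG GF_off).
- by move=> P_off i Yi0; rewrite F_off // P_off // scaler0.
Qed.

Lemma part_iii n :
  A3 M d Y \in unitmx
  /\ (forall P : 'M[R]_(N, n), forall F, S3 M d Y F P <-> A3 M d Y *m F = P)
  /\ (forall P : 'M[R]_(N, n), exists! F, S3 M d Y F P)
  /\ (forall P F : 'M[R]_(N, n), S3 M d Y F P ->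
        (gam * \sum_i Y i) *: \sum_j row j F = \sum_j row j P)
  /\ (forall P : 'M[R]_(N, n), \sum_i row i P = 0 ->
        (forall F, S3 M d Y F P <-> S2 M d Y F P) /\ (exists! F, S2 M d Y F P)).
Proof.
split; [exact: A3_unit | split; [by move=> P F; apply: S3_iff_A3 | split]].
- exact: S3_exists_unique.
split; [by move=> P F; apply: S3_sum | move=> P sumP0].
by split; [move=> F; apply: S3_iff_S2 | apply: S2_exists_unique].
Qed.

End MulticomponentDiffusion.

Theorem theorem3p1 (R : realFieldType) (N n : nat)
  (M : 'I_N -> R) (d : 'I_N -> 'I_N -> R)
  (hN : (2 <= N)%N) (hn : (1 <= n)%N)
  (hM : forall i, 0 < M i)
  (hdsym : forall i j, i != j -> d i j = d j i)
  (hdpos : forall i j, i != j -> 0 < d i j)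
  (Y : 'I_N -> R) (hY0 : forall i, 0 <= Y i) (hYnz : exists i, Y i != 0) :
  (* (i) all Y_i > 0 *)
  ((forall i, 0 < Y i) ->
     forall P : 'M[R]_(N, n), \sum_i row i P = 0 ->
       (exists! V, S1 M d Y V P)
       /\ (forall V, S1 M d Y V P ->
             forall F, S2 M d Y F P <-> (forall i, row i F = Y i *: row i V))
       /\ (forall V, S1 M d Y V P ->
             forall W, Cm M d Y *m W = P <-> W = V)
       /\ posdef (Cm M d Y))
  /\
  (* (ii) some (but not all) Y_i vanish *)
  ((exists i, Y i = 0) ->
     forall P : 'M[R]_(N, n), \sum_i row i P = 0 ->
       (forall V W, S1 M d Y V P -> S1 M d Y W P ->
          forall i, 0 < Y i -> row i V = row i W)
       /\ (forall V, S1 M d Y V P -> forall i, Y i = 0 ->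
             exists W, S1 M d Y W P /\ row i W != row i V)
       /\ (exists! F, S2 M d Y F P)
       /\ (forall F, S2 M d Y F P ->
             (forall i, Y i = 0 -> row i F = (Ssum M d Y i)^-1 *: row i P)
             /\ Ksys M d Y F P
             /\ (forall G, (forall i, Y i = 0 -> row i G = row i F) ->
                   Ksys M d Y G P -> forall i, 0 < Y i -> row i G = row i F)
             /\ ((forall i, Y i = 0 -> row i P = 0) ->
                   forall i, Y i = 0 -> row i F = 0)))
  /\
  (* (iii) all cases *)
  (A3 M d Y \in unitmx
   /\ (forall P : 'M[R]_(N, n), forall F, S3 M d Y F P <-> A3 M d Y *m F = P)
   /\ (forall P : 'M[R]_(N, n), exists! F, S3 M d Y F P)
   /\ (forall P F : 'M[R]_(N, n), S3 M d Y F P ->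
         (gam M d * \sum_i Y i) *: \sum_j row j F = \sum_j row j P)
   /\ (forall P : 'M[R]_(N, n), \sum_i row i P = 0 ->
         (forall F, S3 M d Y F P <-> S2 M d Y F P)
         /\ (exists! F, S2 M d Y F P))).
Proof.
split; first exact: part_i.
split; first by move=> _; exact: part_ii.
exact: part_iii.
Qed.
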